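(* For each $n\ge1$ and $1\le j\le n$, $p_n^a(j)$ is increasing in $a_j$: if $a,a'\in A$ satisfy $a_k=a'_k$ for all $k\ne j$ and $a_j>a'_j$, then $p_n^a(j)>p_n^{a'}(j)$.
   Context: Let $A=\{(a_1,a_2,\dots): a_j\in\{1,\dots,j\}\text{ for all }j\}$. For $a\in A$, define permutations $p_n^a\in S_n$ recursively: $p_1^a$ is the permutation of $\{1\}$; for $n\ge2$, $p_n^a(n)=a_n$ and, for $1\le i\le n-1$, $p_n^a(i)=p_{n-1}^a(i)$ if $p_{n-1}^a(i)<a_n$ and $p_n^a(i)=p_{n-1}^a(i)+1$ if $p_{n-1}^a(i)\ge a_n$. (This is the Mallows process with insertion positions $p_j(j)=a_j$.) *)

From mathcomp Require Import all_boot.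

(* Sequences a = (a_1, a_2, ...) are functions nat -> nat (index 0 unused).
   A = {a : a_j in {1..j} for all j >= 1}. *)
Definition inA (a : nat -> nat) : Prop := forall j, 1 <= j -> 1 <= a j <= j.

(* mallows n a i = p_n^a(i), meaningful for 1 <= i <= n (a permutation of
   {1..n} represented as a function on nat).  p_1^a = identity on {1}. *)
Fixpoint mallows (n : nat) (a : nat -> nat) (i : nat) : nat :=
  match n with
  | 0 => 0
  | 1 => 1
  | m.+1 =>
      if i == n then a n
      else let v := mallows m a i in
           if v < a n then v else v.+1
  end.

From mathcomp Require Import all_boot.

(* Each insertion step of the Mallows process relabels the old values through
   [bump (a_n)], which is strictly increasing.  Hence once position j has been
   filled with a_j (at time n = j), the order between p^a(j) and p^{a'}(j) is
   preserved at every later time, since both sequences insert the same a_n. *)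

Lemma ltn_bump2 h i k : (bump h i < bump h k) = (i < k).
Proof. by rewrite !ltnNge leq_bump2. Qed.

Lemma mallows_last n a : 2 <= n -> mallows n a n = a n.
Proof. by case: n => [|[|n]] //= _; rewrite eqxx. Qed.

Lemma mallows_shift n a i : 1 <= n -> i <= n ->
  mallows n.+1 a i = bump (a n.+1) (mallows n a i).
Proof.
case: n => [//|n] _ le_in.
change (mallows n.+2 a i) with (if i == n.+2 then a n.+2 else
  let v := mallows n.+1 a i in if v < a n.+2 then v else v.+1).
by rewrite ltn_eqF //= /bump; case: leqP.
Qed.

Lemma inA_1 {a} : inA a -> a 1 = 1.
Proof.
by move=> Aa; have /andP[ge1 le1] := Aa 1 (leqnn 1); apply/eqP; rewrite eqn_leq le1.
Qed.

Theorem lemma3p1 (n j : nat) (a a' : nat -> nat) :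
  1 <= n -> 1 <= j <= n -> inA a -> inA a' ->
  (forall k, k != j -> a k = a' k) ->
  a' j < a j ->
  mallows n a' j < mallows n a j.
Proof.
move=> _ /andP[j_gt0 le_jn] Aa Aa' eq_aa' lt_a'a.
(* [mallows 1] ignores [a 1], but [j = 1] is impossible since [a 1 = a' 1 = 1]. *)
have j_gt1 : 1 < j.
  rewrite ltn_neqAle j_gt0 andbT; apply: contraTneq lt_a'a => <-.
  by rewrite (inA_1 Aa) (inA_1 Aa').
rewrite -(subnKC le_jn); elim: (n - j) => [|m IHm].
  by rewrite addn0 !mallows_last.
have le_jm : j <= j + m by rewrite leq_addr.
have jm_gt0 : 0 < j + m by rewrite (leq_trans j_gt0).
have ne_j : (j + m).+1 != j by rewrite gtn_eqF // ltnS.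
by rewrite addnS !mallows_shift // eq_aa' // ltn_bump2.
Qed.
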